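(* Let $\lambda\ge\omega_3$ be a cardinal and let $F:[\lambda]^2\to\omega_1$ be an $\omega_1$-strongly unbounded function on $\lambda$. Then the forcing poset $\mathcal P=\langle P,\le\rangle$ defined in the context (using this $F$) satisfies the countable chain condition.
   Context: A function $F:[\lambda]^2\to\omega_1$ is $\omega_1$-strongly unbounded on $\lambda$ if for every ordinal $\delta<\omega_1$, every finite cardinal $\nu<\omega$ and every family $A\subseteq[\lambda]^\nu$ of pairwise disjoint sets with $|A|=\omega_1$, there are distinct $a,b\in A$ such that $F\{\alpha,\beta\}>\delta$ for all $\alpha\in a$, $\beta\in b$. For $s=\langle\alpha,\zeta\rangle$ write $\pi(s)=\alpha$, $\rho(s)=\zeta$. Let $T=(\omega_1\times\omega)\cup(\{\omega_1,\omega_1+1\}\times\lambda)$, with $T_\alpha=\{\alpha\}\times\omega$ for $\alpha<\omega_1$, $T_{\omega_1}=\{\omega_1\}\times\lambda$, $T_{\omega_1+1}=\{\omega_1+1\}\times\lambda$, and $t_\xi=\langle\omega_1+1,\xi\rangle$ for $\xi<\lambda$. Let $\mathbb B=\{S\}\cup\lambda$ (where $S$ is a new symbol), $\mathbb B_S=\omega_1\times\omega$ and $\mathbb B_\zeta=\{\omega_1\}\times[\omega\cdot\zeta,\omega\cdot\zeta+\omega)\cup\{t_\zeta\}$ for $\zeta<\lambda$; these partition $T$, and $\pi_B:T\to\mathbb B$ is defined by $x\in\mathbb B_{\pi_B(x)}$. $P$ consists of all triples $p=\langle X,\preceq,i\rangle$ such that: (P1) $X\in[T]^{<\omega}$; (P2)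 $\preceq$ is a partial order on $X$ such that $x\prec y$ implies $\pi(x)<\pi(y)$; (P3) if $X\cap\mathbb B_\zeta\ne\emptyset$ for some $\zeta<\lambda$, then $t_\zeta\in X$; (P4) if $x\in X\cap T_{\omega_1}\cap\mathbb B_\zeta$ for $\zeta<\lambda$, then $x\prec t_\zeta$ and $x\not\prec t_\xi$ for all $\xi\ne\zeta$ (with $t_\xi\in X$); (P5) if $s\neq t$ lie in the same $\mathbb B_b$ ($b\in\mathbb B$) with $\pi(s)=\pi(t)$, then $i\{s,t\}=\emptyset$; (P6) if $t\in X\cap T_{\alpha+1}$ for some $\alpha\le\omega_1$ and $s\prec t$, then there is $v\in X\cap T_\alpha$ with $s\preceq v\prec t$; (P7) $i:[X]^2\to[X]^{<\omega}$ satisfies $i\{x,y\}=\{x\}$ whenever $x\prec y$, and whenever $x,y\in X$ are $\preceq$-incomparable: (a) for all $u\in X$, ($u\preceq x$ and $u\preceq y$) iff $u\preceq v$ for some $v\in i\{x,y\}$; (b) if $x,y\in T_{\omega_1}\cup T_{\omega_1+1}$ and $\pi_B(x)\ne\pi_B(y)$, then $\pi[i\{x,y\}]\subseteq F\{\pi_B(x),\pi_B(y)\}$ (the ordinal $F\{\cdot,\cdot\}<\omega_1$ viewed as the set of smaller ordinals). Order: $\langle X',\preceq',i'\rangle\le\langle X,\preceq,i\rangle$ iff $X\subseteq X'$, $\preceq=\preceq'\cap(X\times X)$, and $i\subseteq i'$. *)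

From Stdlib Require Import List.
Import ListNotations.
Set Implicit Arguments.

Definition injects (X Y : Type) : Prop :=
  exists f : X -> Y, forall a b, f a = f b -> a = b.

Definition strict_wellorder (B : Type) (lt : B -> B -> Prop) : Prop :=
  (forall a, ~ lt a a) /\
  (forall a b c, lt a b -> lt b c -> lt a c) /\
  (forall a b, lt a b \/ a = b \/ lt b a) /\
  well_founded lt.

(** (B, lt) is (order-isomorphic to) the initial ordinal of the cardinal
    successor of |A|: it is well ordered, |B| > |A|, and every proper initial
    segment has size <= |A|. *)
Definition next_initial_ordinal (A B : Type) (lt : B -> B -> Prop) : Prop :=
  strict_wellorder lt /\ ~ injects B A /\
  (forall b, injects {c : B | lt c b} A).

Definition is_omega1 (W : Type) (lt : W -> W -> Prop) : Prop :=
  next_initial_ordinal nat lt.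

Definition card_ge_omega3 (W1 : Type) (lt1 : W1 -> W1 -> Prop) (L : Type) : Prop :=
  exists (W2 : Type) (lt2 : W2 -> W2 -> Prop) (W3 : Type) (lt3 : W3 -> W3 -> Prop),
    next_initial_ordinal W1 lt2 /\ next_initial_ordinal W2 lt3 /\ injects W3 L.

(** omega_1-strongly unbounded; a family A of size omega_1 of pairwise disjoint
    nu-element subsets of L is given by an injective enumeration g : W -> [L]^nu
    (each set a duplicate-free list of length nu). *)
Definition strongly_unbounded (W : Type) (ltW : W -> W -> Prop) (L : Type)
    (F : L -> L -> W) : Prop :=
  forall (delta : W) (nu : nat) (g : W -> list L),
    (forall xi, NoDup (g xi) /\ length (g xi) = nu) ->
    (forall xi eta, (forall a, In a (g xi) <-> In a (g eta)) -> xi = eta) ->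
    (forall xi eta, xi <> eta -> forall a, In a (g xi) -> ~ In a (g eta)) ->
    exists xi eta, xi <> eta /\
      forall a b, In a (g xi) -> In b (g eta) -> ltW delta (F a b).

Section Forcing.
Variables (W : Type) (ltW : W -> W -> Prop) (L : Type) (F : L -> L -> W).

(** The tree T:  TL a n = <a, n> (a < omega_1, n < omega);
    TM z n = <omega_1, omega*z + n>;  TT z = t_z = <omega_1 + 1, z>. *)
Inductive T : Type :=
| TL (a : W) (n : nat)
| TM (z : L) (n : nat)
| TT (z : L).

(** levels: ordinals <= omega_1 + 1 *)
Inductive Lev : Type := LW (a : W) | Lom1 | Lom1p1.

Definition lev (x : T) : Lev :=
  match x with TL a _ => LW a | TM _ _ => Lom1 | TT _ => Lom1p1 end.

Definition ltLev (a b : Lev) : Prop :=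
  match a, b with
  | LW a, LW b => ltW a b
  | LW _, Lom1 => True
  | LW _, Lom1p1 => True
  | Lom1, Lom1p1 => True
  | _, _ => False
  end.

Definition is_succ_lev (a b : Lev) : Prop :=
  ltLev a b /\ forall c, ~ (ltLev a c /\ ltLev c b).

Definition lev_below (l : Lev) (d : W) : Prop :=
  match l with LW a => ltW a d | _ => False end.

Inductive Bidx : Type := BS | BZ (z : L).

Definition piB (x : T) : Bidx :=
  match x with TL _ _ => BS | TM z _ => BZ z | TT z => BZ z end.

(** a triple <X, ⪯, i>; finite sets are lists (up to having the same members) *)
Record cond : Type := mkCond {
  cX : list T;
  cR : T -> T -> Prop;
  cI : T -> T -> list T }.

Definition sameset (s t : list T) : Prop := forall x, In x s <-> In x t.

Definition strictR (p : cond) (x y : T) : Prop := cR p x y /\ x <> y.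

Definition in_P (p : cond) : Prop :=
  (forall x y, cR p x y -> In x (cX p) /\ In y (cX p)) /\
  (forall x, In x (cX p) -> cR p x x) /\
  (forall x y, cR p x y -> cR p y x -> x = y) /\
  (forall x y z, cR p x y -> cR p y z -> cR p x z) /\
  (forall x y, strictR p x y -> ltLev (lev x) (lev y)) /\
  (forall x z, In x (cX p) -> piB x = BZ z -> In (TT z) (cX p)) /\
  (forall z n, In (TM z n) (cX p) ->
     strictR p (TM z n) (TT z) /\
     forall xi, xi <> z -> In (TT xi) (cX p) -> ~ strictR p (TM z n) (TT xi)) /\
  (forall s t, In s (cX p) -> In t (cX p) -> s <> t -> piB s = piB t ->
     lev s = lev t -> forall u, ~ In u (cI p s t)) /\
  (forall t s a, In t (cX p) -> is_succ_lev a (lev t) -> strictR p s t ->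
     exists v, In v (cX p) /\ lev v = a /\ cR p s v /\ strictR p v t) /\
  (forall x y, In x (cX p) -> In y (cX p) -> x <> y ->
     sameset (cI p x y) (cI p y x) /\ (forall u, In u (cI p x y) -> In u (cX p))) /\
  (forall x y, strictR p x y -> sameset (cI p x y) [x]) /\
  (forall x y, In x (cX p) -> In y (cX p) -> ~ cR p x y -> ~ cR p y x ->
     (forall u, In u (cX p) ->
        (cR p u x /\ cR p u y <-> exists v, In v (cI p x y) /\ cR p u v)) /\
     (forall z xi, (lev x = Lom1 \/ lev x = Lom1p1) ->
        (lev y = Lom1 \/ lev y = Lom1p1) ->
        piB x = BZ z -> piB y = BZ xi -> z <> xi ->
        forall v, In v (cI p x y) -> lev_below (lev v) (F z xi))).

Definition extends (q p : cond) : Prop :=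
  (forall x, In x (cX p) -> In x (cX q)) /\
  (forall x y, In x (cX p) -> In y (cX p) -> (cR p x y <-> cR q x y)) /\
  (forall x y, In x (cX p) -> In y (cX p) -> x <> y ->
     sameset (cI q x y) (cI p x y)).

Definition compatible (p q : cond) : Prop :=
  exists r, in_P r /\ extends r p /\ extends r q.

Definition ccc : Prop :=
  forall A : cond -> Prop,
    (forall p, A p -> in_P p) ->
    (forall p q, A p -> A q -> p <> q -> ~ compatible p q) ->
    exists f : cond -> nat, forall p q, A p -> A q -> f p = f q -> p = q.

End Forcing.

(* Suppose A is an uncountable antichain.  Each point of T carries a tag: its
   block index ζ < λ if it lies on level ω1 or ω1+1, its level α < ω1 otherwise.
   1. By the Δ-system lemma, uncountably many p ∈ A have tag sets forming a
      Δ-system with root R.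
   2. Take ρ < ω1 above the levels in R and above F{ζ,ξ} for block indices
      ζ, ξ in R.  The core (points of level ≤ ρ and points of blocks in R) is
      countable and closed under meets, so by pigeonhole uncountably many p
      share their colour: trace on the core (points, order, meets) and number
      of new block indices.  The new index sets are pairwise disjoint.
   3. Strong unboundedness gives p ≠ q of the same colour with F{ζ,ξ} > ρ for
      all new ζ of p and ξ of q.
   4. Such p, q agree on their common points, and an amalgamation (union of
      the points, order generated through common points, meets inherited or
      computed as common lower bounds) is a common extension: a contradiction. *)

From Stdlib Require Import List Arith Lia Classical ClassicalEpsilon FunctionalExtensionality Cantor.
Import ListNotations.
Set Implicit Arguments.

(** * Countable sets *)

Definition countable {X : Type} (C : X -> Prop) : Prop :=
  exists g : nat -> option X, forall x, C x -> exists n, g n = Some x.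
Definition uncountable {X : Type} (C : X -> Prop) : Prop := ~ countable C.

Definition witness {A : Type} {P : A -> Prop} (H : exists x, P x) : {x | P x} :=
  constructive_indefinite_description P H.

Definition classic_eq_dec {A : Type} (x y : A) : {x = y} + {x <> y} :=
  excluded_middle_informative (x = y).

Definition truth (P : Prop) : bool := if excluded_middle_informative P then true else false.

Lemma truth_true P : truth P = true <-> P.
Proof. unfold truth. destruct (excluded_middle_informative P); split; auto; discriminate. Qed.

Lemma truth_inj P Q : truth P = truth Q -> (P <-> Q).
Proof.
  unfold truth.
  destruct (excluded_middle_informative P), (excluded_middle_informative Q); try discriminate; tauto.
Qed.

Lemma countable_sub X (C D : X -> Prop) : (forall x, C x -> D x) -> countable D -> countable C.
Proof. intros H [g Hg]. exists g. intros x Cx. apply Hg, H, Cx. Qed.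

Lemma countable_empty X (C : X -> Prop) : (forall x, ~ C x) -> countable C.
Proof. intros H. exists (fun _ => None). intros x Cx. exfalso. eapply H; eauto. Qed.

Lemma countable_union_nat X (C : nat -> X -> Prop) :
  (forall n, countable (C n)) -> countable (fun x => exists n, C n x).
Proof.
  intros H.
  pose (G := fun n => proj1_sig (witness (H n))).
  exists (fun k => G (fst (of_nat k)) (snd (of_nat k))).
  intros x [n Hn].
  destruct (proj2_sig (witness (H n)) x Hn) as [m Hm].
  exists (to_nat (n, m)). rewrite cancel_of_to. exact Hm.
Qed.

Lemma countable_union X (C D : X -> Prop) :
  countable C -> countable D -> countable (fun x => C x \/ D x).
Proof.
  intros HC HD.
  apply countable_sub with
    (D := fun x => exists n, (fun n x => match n with 0 => C x | _ => D x end) n x).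
  - intros x [Cx|Dx]; [exists 0 | exists 1]; auto.
  - apply countable_union_nat. intros [|n]; auto.
Qed.

Lemma countable_image X Y (C : X -> Prop) (f : X -> Y) :
  countable C -> countable (fun y => exists x, C x /\ f x = y).
Proof.
  intros [g Hg]. exists (fun n => option_map f (g n)).
  intros y [x [Cx <-]]. destruct (Hg x Cx) as [n Hn]. exists n. rewrite Hn. reflexivity.
Qed.

Lemma countable_prod X Y (A : X -> Prop) (B : Y -> Prop) :
  countable A -> countable B -> countable (fun p : X * Y => A (fst p) /\ B (snd p)).
Proof.
  intros [g Hg] [h Hh].
  exists (fun k => match g (fst (of_nat k)), h (snd (of_nat k)) with
                   | Some a, Some b => Some (a, b) | _, _ => None end).
  intros [a b] [Ha Hb]. destruct (Hg a Ha) as [n Hn]. destruct (Hh b Hb) as [m Hm].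
  exists (to_nat (n, m)). rewrite cancel_of_to. simpl. rewrite Hn, Hm. reflexivity.
Qed.

Lemma countable_full_nat : countable (fun _ : nat => True).
Proof. exists Some. intros x _. exists x. reflexivity. Qed.

Lemma countable_In X (l : list X) : countable (fun x => In x l).
Proof.
  exists (fun n => nth_error l n). intros x Hx.
  destruct (In_nth_error l x Hx) as [n Hn]. exists n. auto.
Qed.

Lemma countable_lists_of_length X (A : X -> Prop) : countable A -> forall m,
  countable (fun l => length l = m /\ forall x, In x l -> A x).
Proof.
  intros HA. induction m as [|m IH].
  - exists (fun _ => Some []). intros [|a l] [Hl _]; try discriminate. exists 0. reflexivity.
  - apply countable_sub with (D := fun l => exists p,
        (A (fst p) /\ (fun l => length l = m /\ forall x, In x l -> A x) (snd p)) /\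
        fst p :: snd p = l).
    + intros [|a l] [Hl Hin]; try discriminate.
      exists (a, l). simpl in *. repeat split; auto; lia.
    + apply countable_image.
      exact (countable_prod (B := fun l => length l = m /\ forall x, In x l -> A x) HA IH).
Qed.

Lemma countable_lists X (A : X -> Prop) :
  countable A -> countable (fun l => forall x, In x l -> A x).
Proof.
  intros HA.
  apply countable_sub with (D := fun l => exists m, length l = m /\ forall x, In x l -> A x).
  - intros l Hl. exists (length l). auto.
  - apply countable_union_nat. intros m. apply countable_lists_of_length, HA.
Qed.

Lemma countable_bool_lists : countable (fun _ : list bool => True).
Proof.
  apply countable_sub with (D := fun l => forall b, In b l -> In b [true; false]).
  - intros l _ [|] _; simpl; auto.
  - apply countable_lists, countable_In.
Qed.

Lemma countable_injection X (C : X -> Prop) : countable C ->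
  exists f : X -> nat, forall a b, C a -> C b -> f a = f b -> a = b.
Proof.
  intros [g Hg].
  exists (fun x => match excluded_middle_informative (exists n, g n = Some x) with
                   | left H => proj1_sig (witness H) | right _ => 0 end).
  intros a b Ca Cb.
  destruct (excluded_middle_informative (exists n, g n = Some a)) as [Ha|Ha]; [|exfalso; auto].
  destruct (excluded_middle_informative (exists n, g n = Some b)) as [Hb|Hb]; [|exfalso; auto].
  intros E. pose proof (proj2_sig (witness Ha)) as E1. pose proof (proj2_sig (witness Hb)) as E2.
  simpl in *. rewrite E in E1. rewrite E1 in E2. injection E2. auto.
Qed.

Lemma injection_countable X (C : X -> Prop) (f : X -> nat) :
  (forall a b, C a -> C b -> f a = f b -> a = b) -> countable C.
Proof.
  intros Hf.
  exists (fun n => match excluded_middle_informative (exists x, C x /\ f x = n) with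
                   | left H => Some (proj1_sig (witness H)) | right _ => None end).
  intros x Cx. exists (f x).
  destruct (excluded_middle_informative (exists y, C y /\ f y = f x)) as [H|H].
  - destruct (proj2_sig (witness H)) as [H1 H2]. f_equal. apply Hf; auto.
  - exfalso. apply H. eauto.
Qed.

Lemma uncountable_inhabited X (S : X -> Prop) : uncountable S -> exists a, S a.
Proof.
  intros H. apply NNPP. intros N. apply H. apply countable_empty. intros x Sx. apply N. eauto.
Qed.

Lemma uncountable_avoid X (S : X -> Prop) (a : X) : uncountable S -> exists b, S b /\ b <> a.
Proof.
  intros H. apply NNPP. intros N. apply H.
  apply countable_sub with (D := fun x => In x [a]); [|apply countable_In].
  intros x Sx. left. apply NNPP. intros N2. apply N. eauto.
Qed.

Lemma pigeonhole X Y (S : X -> Prop) (c : X -> Y) :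
  uncountable S -> countable (fun y => exists x, S x /\ c x = y) ->
  exists x0, S x0 /\ uncountable (fun x => S x /\ c x = c x0).
Proof.
  intros U [g Hg]. apply NNPP. intros N. apply U.
  apply countable_sub with (D := fun x => exists n, (fun n x => S x /\ g n = Some (c x)) n x).
  - intros x Sx. destruct (Hg (c x)) as [n Hn]; eauto.
  - apply countable_union_nat. intros n.
    destruct (classic (exists x0, S x0 /\ g n = Some (c x0))) as [[x0 [S0 E0]]|NE].
    + apply NNPP. intros N2. apply N. exists x0. split; auto.
      intros C2. apply N2. eapply countable_sub; [|exact C2].
      intros x [Sx E]. split; auto. rewrite E0 in E. injection E; auto.
    + apply countable_empty. intros x Hx. apply NE. eauto.
Qed.

(** * The ordinal ω1 *)

Section Omega1.
Variables (W : Type) (ltW : W -> W -> Prop).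
Hypothesis omega1 : is_omega1 ltW.

Lemma omega1_uncountable : uncountable (fun _ : W => True).
Proof.
  intros C. destruct (countable_injection C) as [f Hf].
  destruct omega1 as [_ [N _]]. apply N. exists f. intros a b E. apply Hf; auto.
Qed.

Lemma initial_segment_countable (w : W) : countable (fun c => ltW c w).
Proof.
  destruct omega1 as [_ [_ H]]. destruct (H w) as [f Hf].
  apply countable_sub with (D := fun c => exists d : {c | ltW c w}, True /\ proj1_sig d = c).
  - intros c Hc. exists (exist _ c Hc). auto.
  - apply countable_image. apply injection_countable with (f := f). intros a b _ _. apply Hf.
Qed.

Definition leW (a b : W) : Prop := ltW a b \/ a = b.

Lemma leW_countable (w : W) : countable (fun c => leW c w).
Proof.
  apply countable_union; [apply initial_segment_countable|].
  apply countable_sub with (D := fun c => In c [w]); [|apply countable_In].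
  intros c <-. left. reflexivity.
Qed.

Lemma ltW_trans a b c : ltW a b -> ltW b c -> ltW a c.
Proof. destruct omega1 as [[_ [H _]] _]. eauto. Qed.
Lemma ltW_irrefl a : ~ ltW a a.
Proof. destruct omega1 as [[H _] _]. auto. Qed.
Lemma ltW_total a b : ltW a b \/ a = b \/ ltW b a.
Proof. destruct omega1 as [[_ [_ [H _]]] _]. auto. Qed.
Lemma ltW_wf : well_founded ltW.
Proof. destruct omega1 as [[_ [_ [_ H]]] _]. auto. Qed.

Lemma leW_ltW_trans a b c : leW a b -> ltW b c -> ltW a c.
Proof. intros [H|<-] H2; auto. eapply ltW_trans; eauto. Qed.
Lemma leW_trans a b c : leW a b -> leW b c -> leW a c.
Proof. intros [H|<-] [H2|<-]; unfold leW; auto. left; eapply ltW_trans; eauto. Qed.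

Lemma finite_bounded (l : list W) : exists m, forall a, In a l -> leW a m.
Proof.
  induction l as [|a l [m Hm]].
  - destruct (uncountable_inhabited omega1_uncountable) as [w _]. exists w. intros a [].
  - destruct (ltW_total a m) as [H|[<-|H]].
    + exists m. intros b [<-|Hb]; auto. left; auto.
    + exists a. intros b [<-|Hb]; auto. right; auto.
    + exists a. intros b [<-|Hb]. right; auto. apply leW_trans with m; auto. left; auto.
Qed.

Lemma omega1_recursion X (S : X -> Prop) (Comp : X -> X -> Prop) :
  (forall C : X -> Prop, countable C -> exists x, S x /\ ~ C x /\ forall c, C c -> Comp c x) ->
  exists e : W -> X, (forall w, S (e w)) /\
     (forall v w, ltW v w -> e v <> e w /\ Comp (e v) (e w)).
Proof.
  intros Hyp.
  assert (Hc : forall w (rec : forall v, ltW v w -> X),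
             countable (fun x => exists v (h : ltW v w), rec v h = x)).
  { intros w rec. destruct (initial_segment_countable w) as [g Hg].
    exists (fun n => match g n with
                     | Some v => match excluded_middle_informative (ltW v w) with
                                 | left h => Some (rec v h) | right _ => None end
                     | None => None end).
    intros x [v [h <-]]. destruct (Hg v h) as [n Hn]. exists n. rewrite Hn.
    destruct (excluded_middle_informative (ltW v w)) as [h'|h']; [|contradiction].
    do 2 f_equal. apply proof_irrelevance. }
  pose (step := fun w (rec : forall v, ltW v w -> X) => proj1_sig (witness (Hyp _ (Hc w rec)))).
  pose (e := Fix ltW_wf (fun _ => X) step).
  assert (Ee : forall w, e w = step w (fun v _ => e v)).
  { intros w. refine (Fix_eq ltW_wf (fun _ => X) step _ w). intros x f g Hfg.
    replace f with g; [reflexivity|].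
    apply functional_extensionality_dep. intros y.
    apply functional_extensionality_dep. intros p. symmetry. apply Hfg. }
  exists e. split.
  - intros w. rewrite Ee. exact (proj1 (proj2_sig (witness (Hyp _ (Hc w (fun v _ => e v)))))).
  - intros v w Hvw. rewrite (Ee w).
    destruct (proj2_sig (witness (Hyp _ (Hc w (fun v _ => e v))))) as [_ [H1 H2]].
    split.
    + intros E. apply H1. exists v, Hvw. exact E.
    + apply H2. exists v, Hvw. reflexivity.
Qed.

Lemma injective_range_uncountable X (e : W -> X) : (forall v w, ltW v w -> e v <> e w) ->
  uncountable (fun x => exists w, e w = x).
Proof.
  intros He C. destruct (countable_injection C) as [f Hf].
  apply omega1_uncountable. apply injection_countable with (f := fun w => f (e w)).
  intros a b _ _ E. apply Hf in E; eauto.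
  destruct (ltW_total a b) as [H|[H|H]]; auto; exfalso; eapply He; eauto.
Qed.

Lemma uncountable_enumeration X (S : X -> Prop) : uncountable S ->
  exists e : W -> X, (forall w, S (e w)) /\ (forall v w, v <> w -> e v <> e w).
Proof.
  intros U. destruct (@omega1_recursion X S (fun _ _ => True)) as [e [H1 H2]].
  - intros C HC. apply NNPP. intros N. apply U.
    eapply countable_sub; [|exact HC]. intros x Sx. apply NNPP. intros N2. apply N. eauto.
  - exists e. split; auto. intros v w Hvw.
    destruct (ltW_total v w) as [H|[H|H]]; [apply H2; auto | contradiction |].
    intros E. symmetry in E. revert E. apply H2; auto.
Qed.

End Omega1.

(** * The Δ-system lemma *)

Definition is_root X Y (S : X -> Prop) (tg : X -> list Y) (R : list Y) : Prop :=
  forall p q, S p -> S q -> p <> q -> forall y, (In y (tg p) /\ In y (tg q)) <-> In y R.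

Section DeltaSystem.
Variables (W : Type) (ltW : W -> W -> Prop).
Hypothesis omega1 : is_omega1 ltW.

(** If every point lies in only countably many of the sets, an uncountable
    family has an uncountable pairwise disjoint subfamily: build it by
    recursion, each new set avoiding the countably many points used so far. *)
Lemma disjoint_subfamily X Y (S : X -> Prop) (tg : X -> list Y) :
  (forall t, countable (fun p => S p /\ In t (tg p))) -> uncountable S ->
  exists S', (forall x, S' x -> S x) /\ uncountable S' /\ is_root S' tg [].
Proof.
  intros Ht U.
  pose (disj := fun c x => forall y, In y (tg c) -> In y (tg x) -> False).
  destruct (@omega1_recursion W ltW omega1 X S disj) as [e [He1 He2]].
  - intros C [g Hg].
    (* the sets in C, together with all sets meeting a set of C *)
    set (B := fun x => C x \/ exists n k, S x /\ exists c y, g n = Some c /\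
                         nth_error (tg c) k = Some y /\ In y (tg x)).
    assert (HB : countable B).
    { apply countable_union; [exists g; auto|].
      apply countable_union_nat. intros n. apply countable_union_nat. intros k.
      destruct (classic (exists c y, g n = Some c /\ nth_error (tg c) k = Some y))
        as [[c [y [E1 E2]]]|NE].
      - eapply countable_sub; [|exact (Ht y)]. intros x [Sx [c' [y' [E1' [E2' I]]]]].
        rewrite E1 in E1'. injection E1' as <-. rewrite E2 in E2'. injection E2' as <-. auto.
      - apply countable_empty. intros x [_ [c [y [E1 [E2 _]]]]]. apply NE. eauto. }
    apply NNPP. intros N. apply U. eapply countable_sub; [|exact HB].
    intros x Sx. apply NNPP. intros NB. apply N. exists x. split; [|split]; auto.
    + intros Cx. apply NB. left; auto.
    + intros c Cc y Hy1 Hy2. apply NB. right.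
      destruct (Hg c Cc) as [n Hn]. destruct (In_nth_error _ _ Hy1) as [k Hk].
      exists n, k. split; eauto.
  - exists (fun x => exists w, e w = x). split; [|split].
    + intros x [w <-]; auto.
    + apply injective_range_uncountable with (1 := omega1). intros v w H. apply He2; auto.
    + intros p q [v <-] [w <-] Hne y. split; [|intros []].
      intros [H1 H2]. destruct (ltW_total omega1 v w) as [H|[<-|H]].
      * eapply (proj2 (He2 v w H)); eauto.
      * contradiction.
      * eapply (proj2 (He2 w v H)); eauto.
Qed.

(** Δ-system lemma for sets of bounded size, by induction on the bound: either
    no point is in uncountably many sets, or such a point [t] belongs to the
    root and we recurse on the uncountably many sets containing it, with [t]
    removed. *)
Lemma delta_system_bounded X Y n : forall (S : X -> Prop) (tg : X -> list Y),
  uncountable S -> (forall p, S p -> length (tg p) <= n) ->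
  exists S' R, (forall x, S' x -> S x) /\ uncountable S' /\ is_root S' tg R.
Proof.
  induction n as [|n IH]; intros S tg U Hl;
  (destruct (classic (exists t, uncountable (fun p => S p /\ In t (tg p)))) as [[t Ut]|NA];
   [|destruct (@disjoint_subfamily X Y S tg) as [S' HS']; eauto;
     intros t; apply NNPP; intros N; apply NA; eauto]).
  - exfalso. destruct (uncountable_inhabited Ut) as [p [Sp Ip]]. specialize (Hl p Sp).
    destruct (tg p); simpl in *; [contradiction | lia].
  - pose (tg' := fun p => remove classic_eq_dec t (tg p)).
    destruct (IH (fun p => S p /\ In t (tg p)) tg' Ut) as [S' [R [H1 [H2 H3]]]].
    { intros p [Sp Ip]. pose proof (remove_length_lt classic_eq_dec (tg p) t Ip).
      specialize (Hl p Sp). unfold tg'. lia. }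
    exists S', (t :: R). split; [intros x Hx; apply H1; auto|split; auto].
    intros p q Sp Sq Hne y. specialize (H3 p q Sp Sq Hne y). unfold tg' in H3.
    destruct (classic_eq_dec y t) as [->|Nt].
    + split; [left; auto|]. intros _. split; [apply (H1 p Sp) | apply (H1 q Sq)].
    + simpl. rewrite <- H3. split.
      * intros [A B]. right. split; apply in_in_remove; auto.
      * intros [E|[A B]]; [congruence|].
        split; [exact (proj1 (in_remove _ _ _ _ A)) | exact (proj1 (in_remove _ _ _ _ B))].
Qed.

(** The Δ-system lemma: an uncountable family of finite sets has an
    uncountable subfamily with a root (first fix the size by pigeonhole). *)
Lemma delta_system X Y (S : X -> Prop) (tg : X -> list Y) : uncountable S ->
  exists S' R, (forall x, S' x -> S x) /\ uncountable S' /\ is_root S' tg R.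
Proof.
  intros U.
  assert (Hc : countable (fun m => exists x, S x /\ length (tg x) = m)).
  { apply countable_sub with (D := fun _ => True); auto. exact countable_full_nat. }
  destruct (pigeonhole (fun p => length (tg p)) U Hc) as [x0 [_ U0]].
  destruct (@delta_system_bounded X Y (length (tg x0)) _ tg U0) as [S' [R [H1 [H2 H3]]]].
  { intros p [_ E]. lia. }
  exists S', R. split; [intros x Hx; apply H1; auto | auto].
Qed.

End DeltaSystem.

(** * Conditions and their amalgamation *)

Arguments TL {W L}. Arguments TM {W L}. Arguments TT {W L}.
Arguments LW {W}. Arguments Lom1 {W}. Arguments Lom1p1 {W}.
Arguments BS {L}. Arguments BZ {L}.

Notation common p q x := (In x (cX p) /\ In x (cX q)).

Section Amalgamation.
Variables (W : Type) (ltW : W -> W -> Prop) (L : Type) (F : L -> L -> W).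
Hypothesis omega1 : is_omega1 ltW.
Hypothesis F_sym : forall a b, F a b = F b a.

Notation cond := (cond W L).
Notation T := (T W L).
Notation inP := (in_P ltW F).

Section Clauses.
Variable c : cond.
Hypothesis Hc : inP c.
Lemma cond_dom [x y] : cR c x y -> In x (cX c) /\ In y (cX c). Proof. apply Hc. Qed.
Lemma cond_refl [x] : In x (cX c) -> cR c x x. Proof. apply Hc. Qed.
Lemma cond_trans [x y z] : cR c x y -> cR c y z -> cR c x z. Proof. apply Hc. Qed.
Lemma cond_lev [x y] : strictR c x y -> ltLev ltW (lev x) (lev y). Proof. apply Hc. Qed.
Lemma cond_P3 [x z] : In x (cX c) -> piB x = BZ z -> In (TT z) (cX c). Proof. apply Hc. Qed.
Lemma cond_P4 [z n] : In (TM z n) (cX c) -> strictR c (TM z n) (TT z) /\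
  forall xi, xi <> z -> In (TT xi) (cX c) -> ~ strictR c (TM z n) (TT xi).
Proof. apply Hc. Qed.
Lemma cond_P5 [s t] : In s (cX c) -> In t (cX c) -> s <> t -> piB s = piB t ->
  lev s = lev t -> forall u, ~ In u (cI c s t).
Proof. apply Hc. Qed.
Lemma cond_P6 [t s a] : In t (cX c) -> is_succ_lev ltW a (lev t) -> strictR c s t ->
  exists v, In v (cX c) /\ lev v = a /\ cR c s v /\ strictR c v t.
Proof. apply Hc. Qed.
Lemma cond_i_sym [x y] : In x (cX c) -> In y (cX c) -> x <> y ->
  sameset (cI c x y) (cI c y x) /\ (forall u, In u (cI c x y) -> In u (cX c)).
Proof. apply Hc. Qed.
Lemma cond_i_comparable [x y] : strictR c x y -> sameset (cI c x y) [x]. Proof. apply Hc. Qed.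
Lemma cond_i_meet [x y] : In x (cX c) -> In y (cX c) -> ~ cR c x y -> ~ cR c y x ->
  forall {u}, In u (cX c) -> (cR c u x /\ cR c u y <-> exists v, In v (cI c x y) /\ cR c u v).
Proof. intros Hx Hy N1 N2. destruct Hc as (_&_&_&_&_&_&_&_&_&_&_&H). apply (H x y Hx Hy N1 N2). Qed.
Lemma cond_i_low [x y] : In x (cX c) -> In y (cX c) -> ~ cR c x y -> ~ cR c y x ->
  forall z xi, (lev x = Lom1 \/ lev x = Lom1p1) -> (lev y = Lom1 \/ lev y = Lom1p1) ->
  piB x = BZ z -> piB y = BZ xi -> z <> xi ->
  forall v, In v (cI c x y) -> lev_below ltW (lev v) (F z xi).
Proof. intros Hx Hy N1 N2. destruct Hc as (_&_&_&_&_&_&_&_&_&_&_&H). apply (H x y Hx Hy N1 N2). Qed.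

Lemma cond_i_below [x y v] : In x (cX c) -> In y (cX c) -> ~ cR c x y -> ~ cR c y x ->
  In v (cI c x y) -> In v (cX c) /\ cR c v x /\ cR c v y.
Proof.
  intros Hx Hy N1 N2 Hv.
  assert (Nxy : x <> y) by (intros <-; apply N1, cond_refl, Hx).
  assert (Vc : In v (cX c)) by (apply (cond_i_sym Hx Hy Nxy); auto).
  split; auto. apply (cond_i_meet Hx Hy N1 N2 Vc). exists v. split; auto. apply cond_refl; auto.
Qed.
End Clauses.

Lemma ltLev_trans a b d : ltLev ltW a b -> ltLev ltW b d -> ltLev ltW a d.
Proof. destruct a, b, d; simpl; try tauto. apply ltW_trans; auto. Qed.
Lemma ltLev_irrefl a : ~ ltLev ltW a a.
Proof. destruct a; simpl; auto. apply ltW_irrefl; auto. Qed.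
Definition leLev (a b : Lev W) : Prop := ltLev ltW a b \/ a = b.
Lemma ltLev_leLev_trans a b d : ltLev ltW a b -> leLev b d -> ltLev ltW a d.
Proof. intros H [H2|<-]; auto. eapply ltLev_trans; eauto. Qed.
Lemma lev_below_mono a b d : leLev a b -> lev_below ltW b d -> lev_below ltW a d.
Proof. intros [H|<-] H2; auto. destruct a, b; simpl in *; try tauto. eapply ltW_trans; eauto. Qed.

Lemma cond_leLev [c x y] : inP c -> cR c x y -> leLev (lev x) (lev y).
Proof.
  intros Hc H. destruct (classic (x = y)) as [<-|N]; [right; auto|].
  left. apply (cond_lev Hc). split; auto.
Qed.

Lemma high_lev (x : T) z : piB x = BZ z -> lev x = Lom1 \/ lev x = Lom1p1.
Proof. destruct x; simpl; auto; discriminate. Qed.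

Definition amal_rel (p q : cond) (x y : T) : Prop :=
  cR p x y \/ cR q x y \/
  (exists r, common p q r /\ cR p x r /\ cR q r y) \/
  (exists r, common p q r /\ cR q x r /\ cR p r y).

Definition agree (p q : cond) : Prop :=
  (forall x y, common p q x -> common p q y -> (cR p x y <-> cR q x y)) /\
  (forall x y, common p q x -> common p q y -> x <> y -> sameset (cI p x y) (cI q x y)).

Lemma amal_rel_sym p q x y : amal_rel p q x y -> amal_rel q p x y.
Proof.
  unfold amal_rel. intros [H|[H|[[r [R1 R2]]|[r [R1 R2]]]]]; auto.
  - right; right; right. exists r. split; [tauto | auto].
  - right; right; left. exists r. split; [tauto | auto].
Qed.

Lemma agree_sym p q : agree p q -> agree q p.
Proof.
  intros [A1 A2]. split.
  - intros x y Hx Hy. symmetry. apply A1; tauto.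
  - intros x y Hx Hy N u. symmetry. apply A2; tauto.
Qed.

Section OneSide.
Variables p q : cond.
Hypotheses (Pp : inP p) (Pq : inP q) (Ag : agree p q).

Lemma agree_rel x y : common p q x -> common p q y -> cR q x y -> cR p x y.
Proof. intros. apply Ag; auto. Qed.

Lemma amal_rel_p x y : cR p x y -> amal_rel p q x y. Proof. unfold amal_rel; auto. Qed.
Lemma amal_rel_q x y : cR q x y -> amal_rel p q x y. Proof. unfold amal_rel; auto. Qed.

Lemma amal_rel_restrict {x y} : In x (cX p) -> In y (cX p) -> amal_rel p q x y -> cR p x y.
Proof.
  intros Hx Hy [H|[H|[[r [R1 [R2 R3]]]|[r [R1 [R2 R3]]]]]]; auto.
  - destruct (cond_dom Pq H). apply agree_rel; auto.
  - destruct (cond_dom Pq R3). apply (cond_trans Pp R2). apply agree_rel; auto.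
  - destruct (cond_dom Pq R2). apply (cond_trans Pp (y := r)); auto. apply agree_rel; auto.
Qed.

Lemma amal_rel_dom x y : amal_rel p q x y -> In x (cX p ++ cX q) /\ In y (cX p ++ cX q).
Proof.
  intros [H|[H|[[r [R1 [R2 R3]]]|[r [R1 [R2 R3]]]]]].
  - destruct (cond_dom Pp H). split; apply in_or_app; auto.
  - destruct (cond_dom Pq H). split; apply in_or_app; auto.
  - destruct (cond_dom Pp R2), (cond_dom Pq R3). split; apply in_or_app; auto.
  - destruct (cond_dom Pq R2), (cond_dom Pp R3). split; apply in_or_app; auto.
Qed.

Lemma amal_rel_lev x y : amal_rel p q x y -> x <> y -> ltLev ltW (lev x) (lev y).
Proof.
  intros H N. destruct H as [H|[H|[[r [R1 [R2 R3]]]|[r [R1 [R2 R3]]]]]].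
  - apply (cond_lev Pp). split; auto.
  - apply (cond_lev Pq). split; auto.
  - destruct (classic (x = r)) as [<-|N1]; [apply (cond_lev Pq); split; auto|].
    eapply ltLev_leLev_trans; [apply (cond_lev Pp); split; eauto | exact (cond_leLev Pq R3)].
  - destruct (classic (x = r)) as [<-|N1]; [apply (cond_lev Pp); split; auto|].
    eapply ltLev_leLev_trans; [apply (cond_lev Pq); split; eauto | exact (cond_leLev Pp R3)].
Qed.

Lemma amal_rel_antisym x y : amal_rel p q x y -> amal_rel p q y x -> x = y.
Proof.
  intros H1 H2. apply NNPP. intros N. apply (@ltLev_irrefl (lev x)).
  eapply ltLev_trans; apply amal_rel_lev; eauto.
Qed.

(** Composition on the left with the order of [p]; with its mirror image this
    gives transitivity. *)
Lemma amal_rel_p_compose {x y z} : cR p x y -> amal_rel p q y z -> amal_rel p q x z.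
Proof.
  intros H [G|[G|[[s [S1 [S2 S3]]]|[s [S1 [S2 S3]]]]]].
  - apply amal_rel_p. exact (cond_trans Pp H G).
  - right; right; left. exists y. repeat split; auto.
    + exact (proj2 (cond_dom Pp H)).
    + exact (proj1 (cond_dom Pq G)).
  - right; right; left. exists s. split; auto. split; auto. exact (cond_trans Pp H S2).
  - apply amal_rel_p. apply (cond_trans Pp H). apply (cond_trans Pp (y := s)); auto.
    apply agree_rel; auto. split; [exact (proj2 (cond_dom Pp H)) | exact (proj1 (cond_dom Pq S2))].
Qed.

Lemma amal_rel_leave_p {v y} : In v (cX p) -> ~ In y (cX p) -> amal_rel p q v y ->
  exists r, common p q r /\ cR p v r /\ cR q r y.
Proof.
  intros Hv Hy [H|[H|[[r [R1 [R2 R3]]]|[r [R1 [R2 R3]]]]]].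
  - exfalso. apply Hy, (cond_dom Pp H).
  - exists v. destruct (cond_dom Pq H). repeat split; auto. apply (cond_refl Pp); auto.
  - eauto.
  - exfalso. apply Hy, (cond_dom Pp R3).
Qed.

Lemma amal_rel_enter_p {u x} : ~ In u (cX p) -> In x (cX p) -> amal_rel p q u x ->
  exists r, common p q r /\ cR q u r /\ cR p r x.
Proof.
  intros Hu Hx [H|[H|[[r [R1 [R2 R3]]]|[r [R1 [R2 R3]]]]]].
  - exfalso. apply Hu, (cond_dom Pp H).
  - exists x. destruct (cond_dom Pq H). repeat split; auto. apply (cond_refl Pp); auto.
  - exfalso. apply Hu, (cond_dom Pp R2).
  - eauto.
Qed.

Lemma amal_rel_last_step {s t} : amal_rel p q s t -> s <> t ->
  exists r, amal_rel p q s r /\ r <> t /\ (cR p r t \/ cR q r t).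
Proof.
  intros [H|[H|[[r [[R1p R1q] [R2 R3]]]|[r [[R1p R1q] [R2 R3]]]]]] N.
  - exists s. split; auto. apply amal_rel_p, (cond_refl Pp), (cond_dom Pp H).
  - exists s. split; auto. apply amal_rel_q, (cond_refl Pq), (cond_dom Pq H).
  - destruct (classic (r = t)) as [<-|Nr].
    + exists s. split; auto. apply amal_rel_p, (cond_refl Pp), (cond_dom Pp R2).
    + exists r. split; auto. apply amal_rel_p; auto.
  - destruct (classic (r = t)) as [<-|Nr].
    + exists s. split; auto. apply amal_rel_q, (cond_refl Pq), (cond_dom Pq R2).
    + exists r. split; auto. apply amal_rel_q; auto.
Qed.
End OneSide.

Lemma amal_rel_q_compose {p q x y z} : inP p -> inP q -> agree p q ->
  cR q x y -> amal_rel p q y z -> amal_rel p q x z.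
Proof.
  intros Pp Pq Ag H G. apply amal_rel_sym.
  exact (amal_rel_p_compose Pq Pp (agree_sym Ag) H (amal_rel_sym G)).
Qed.

Lemma amal_rel_trans {p q x y z} : inP p -> inP q -> agree p q ->
  amal_rel p q x y -> amal_rel p q y z -> amal_rel p q x z.
Proof.
  intros Pp Pq Ag [H|[H|[[r [_ [R2 R3]]]|[r [_ [R2 R3]]]]]] G.
  - exact (amal_rel_p_compose Pp Pq Ag H G).
  - exact (amal_rel_q_compose Pp Pq Ag H G).
  - exact (amal_rel_p_compose Pp Pq Ag R2 (amal_rel_q_compose Pp Pq Ag R3 G)).
  - exact (amal_rel_q_compose Pp Pq Ag R2 (amal_rel_p_compose Pp Pq Ag R3 G)).
Qed.

Section MeetsInside.
Variables p q : cond.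
Hypotheses (Pp : inP p) (Pq : inP q) (Ag : agree p q).

Lemma amal_rel_refl x : In x (cX p ++ cX q) -> amal_rel p q x x.
Proof.
  intros H. apply in_app_or in H. destruct H as [H|H].
  - apply amal_rel_p, (cond_refl Pp), H.
  - apply amal_rel_q, (cond_refl Pq), H.
Qed.

(** (P6) for the amalgamation: refine the last step of a chain inside the
    condition it belongs to. *)
Lemma amal_P6 t s a : is_succ_lev ltW a (lev t) -> amal_rel p q s t -> s <> t ->
  exists v, In v (cX p ++ cX q) /\ lev v = a /\ amal_rel p q s v /\ amal_rel p q v t /\ v <> t.
Proof.
  intros Ha H N. destruct (amal_rel_last_step Pp Pq H N) as [r [Hsr [Nr [Hr|Hr]]]].
  - destruct (cond_P6 Pp (proj2 (cond_dom Pp Hr)) Ha (conj Hr Nr)) as [v [V1 [V2 [V3 [V4 V5]]]]].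
    exists v. repeat split; auto; [apply in_or_app; auto | | apply amal_rel_p; auto].
    apply (amal_rel_trans Pp Pq Ag Hsr), amal_rel_p, V3.
  - destruct (cond_P6 Pq (proj2 (cond_dom Pq Hr)) Ha (conj Hr Nr)) as [v [V1 [V2 [V3 [V4 V5]]]]].
    exists v. repeat split; auto; [apply in_or_app; auto | | apply amal_rel_q; auto].
    apply (amal_rel_trans Pp Pq Ag Hsr), amal_rel_q, V3.
Qed.

(** Two points [r1], [r2] common to [p] and [q] and above [u] in [q] have a
    common lower bound [w] that is above [u] in [q]: one of them, or a meet
    of them in [q], which is also a meet in [p] by agreement. *)
Lemma common_lower_bound {u r1 r2} : common p q r1 -> common p q r2 ->
  cR q u r1 -> cR q u r2 ->
  exists w, common p q w /\ cR q u w /\ cR p w r1 /\ cR p w r2.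
Proof.
  intros [R1p R1q] [R2p R2q] A1 A2.
  destruct (classic (cR q r1 r2)) as [C|C].
  { exists r1. repeat split; auto. apply (cond_refl Pp); auto. apply (agree_rel Ag); auto. }
  destruct (classic (cR q r2 r1)) as [C'|C'].
  { exists r2. repeat split; auto. apply (agree_rel Ag); auto. apply (cond_refl Pp); auto. }
  assert (Uq : In u (cX q)) by exact (proj1 (cond_dom Pq A1)).
  destruct (proj1 (cond_i_meet Pq R1q R2q C C' Uq) (conj A1 A2)) as [w [W1 W2]].
  destruct (cond_i_below Pq R1q R2q C C' W1) as [Wq [D1 D2]].
  assert (Nr : r1 <> r2) by (intros <-; apply C, (cond_refl Pq), R1q).
  assert (Wp : In w (cX p)).
  { apply (cond_i_sym Pp R1p R2p Nr). apply (proj2 Ag r1 r2); auto. }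
  exists w. repeat split; auto; apply (agree_rel Ag); auto.
Qed.

Lemma amal_meet_from_q x y u : In x (cX p) -> In y (cX p) -> ~ cR p x y -> ~ cR p y x ->
  ~ In u (cX p) -> amal_rel p q u x -> amal_rel p q u y ->
  exists v, In v (cI p x y) /\ amal_rel p q u v.
Proof.
  intros Hx Hy M1 M2 Hu U1 U2.
  destruct (amal_rel_enter_p Pp Pq Hu Hx U1) as [r1 [R1 [A1 B1]]].
  destruct (amal_rel_enter_p Pp Pq Hu Hy U2) as [r2 [R2 [A2 B2]]].
  destruct (common_lower_bound R1 R2 A1 A2) as [w [Wc [Uw [W1 W2]]]].
  destruct (proj1 (cond_i_meet Pp Hx Hy M1 M2 (proj1 Wc))
                  (conj (cond_trans Pp W1 B1) (cond_trans Pp W2 B2))) as [v [V1 V2]].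
  exists v. split; auto. right; right; right. exists w. auto.
Qed.

Lemma amal_meet_p x y : In x (cX p) -> In y (cX p) ->
  ~ amal_rel p q x y -> ~ amal_rel p q y x ->
  forall u, In u (cX p ++ cX q) ->
    (amal_rel p q u x /\ amal_rel p q u y <-> exists v, In v (cI p x y) /\ amal_rel p q u v).
Proof.
  intros Hx Hy N1 N2 u Hu.
  assert (M1 : ~ cR p x y) by (intros H; apply N1, amal_rel_p, H).
  assert (M2 : ~ cR p y x) by (intros H; apply N2, amal_rel_p, H).
  split.
  - intros [U1 U2]. destruct (classic (In u (cX p))) as [Up|Up].
    + apply (amal_rel_restrict Pp Pq Ag Up Hx) in U1.
      apply (amal_rel_restrict Pp Pq Ag Up Hy) in U2.
      destruct (proj1 (cond_i_meet Pp Hx Hy M1 M2 Up) (conj U1 U2)) as [v [V1 V2]].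
      exists v. split; auto. apply amal_rel_p, V2.
    + apply amal_meet_from_q; auto.
  - intros [v [V1 V2]]. destruct (cond_i_below Pp Hx Hy M1 M2 V1) as [_ [A B]].
    split; apply (amal_rel_trans Pp Pq Ag V2), amal_rel_p; auto.
Qed.
End MeetsInside.

(** The requirements (P5) and (P7) on the value [I x y] of a meet function
    for one pair of points, relative to an order [R] on [X]. *)
Definition pair_ok (R : T -> T -> Prop) (X : list T) (I : T -> T -> list T) (x y : T) : Prop :=
  (piB x = piB y -> lev x = lev y -> forall u, ~ In u (I x y)) /\
  (sameset (I x y) (I y x) /\ forall u, In u (I x y) -> In u X) /\
  (R x y -> sameset (I x y) [x]) /\
  (~ R x y -> ~ R y x ->
     forall u, In u X -> (R u x /\ R u y <-> exists v, In v (I x y) /\ R u v)) /\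
  (~ R x y -> ~ R y x -> forall z xi, piB x = BZ z -> piB y = BZ xi -> z <> xi ->
     forall v, In v (I x y) -> lev_below ltW (lev v) (F z xi)).

Lemma pair_ok_ext R R' X X' I I' x y :
  (forall a b, R a b <-> R' a b) -> (forall u, In u X <-> In u X') ->
  sameset (I x y) (I' x y) -> sameset (I y x) (I' y x) ->
  pair_ok R X I x y -> pair_ok R' X' I' x y.
Proof.
  intros HR HX S1 S2 [A [[B1 B2] [C [D E]]]].
  assert (NR : forall a b, ~ R' a b -> ~ R a b) by (intros a b N H; apply N, HR, H).
  split; [|split; [split|split; [|split]]].
  - intros e1 e2 u Hu. apply (A e1 e2 u), S1, Hu.
  - intros u. rewrite <- (S1 u), <- (S2 u). apply B1.
  - intros u Hu. apply HX, B2, S1, Hu.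
  - intros H u. rewrite <- (S1 u). apply C, HR, H.
  - intros N1 N2 u Hu. rewrite <- !HR, (D (NR _ _ N1) (NR _ _ N2) u (proj2 (HX u) Hu)).
    split; intros [v [V1 V2]]; exists v; split; try apply S1; auto; apply HR; auto.
  - intros N1 N2 z xi Bx By Nz v Hv.
    apply (E (NR _ _ N1) (NR _ _ N2) z xi Bx By Nz v), S1, Hv.
Qed.

Lemma pair_ok_p p q x y : inP p -> inP q -> agree p q ->
  In x (cX p) -> In y (cX p) -> x <> y -> pair_ok (amal_rel p q) (cX p ++ cX q) (cI p) x y.
Proof.
  intros Pp Pq Ag Hx Hy N.
  assert (NR : forall a b, ~ amal_rel p q a b -> ~ cR p a b) by (intros a b M H; apply M, amal_rel_p, H).
  split; [|split; [split|split; [|split]]].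
  - apply (cond_P5 Pp); auto.
  - apply (cond_i_sym Pp); auto.
  - intros u Hu. apply in_or_app. left. apply (cond_i_sym Pp Hx Hy N); auto.
  - intros H. apply (cond_i_comparable Pp). split; auto. apply (amal_rel_restrict Pp Pq Ag); auto.
  - apply (amal_meet_p Pp Pq Ag); auto.
  - intros N1 N2 z xi Bx By Nz v Hv.
    exact (cond_i_low Pp Hx Hy (NR _ _ N1) (NR _ _ N2) (high_lev _ Bx) (high_lev _ By) Bx By Nz v Hv).
Qed.

Definition no_twins (p q : cond) : Prop :=
  forall s t, In s (cX p) -> ~ In s (cX q) -> In t (cX q) -> ~ In t (cX p) ->
  piB s = piB t -> lev s = lev t -> False.

Definition cross_low (p q : cond) : Prop :=
  forall r x y z z', common p q r -> In x (cX p) -> ~ In x (cX q) ->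
  In y (cX q) -> ~ In y (cX p) -> piB x = BZ z -> piB y = BZ z' ->
  (cR q r y \/ cR p r x) -> lev_below ltW (lev r) (F z z').

Lemma cross_low_sym p q : cross_low p q -> cross_low q p.
Proof.
  intros H r x y z z' Hr Hx Hx' Hy Hy' Bx By D. rewrite F_sym.
  apply (H r y x z' z); tauto.
Qed.

(** A common lower bound of a new point of [p] and a new point of [q] passes
    through a common point below one of them, hence is low. *)
Lemma amal_new_lower_bound_low p q x y z z' v : inP p -> inP q -> cross_low p q ->
  In x (cX p) -> ~ In x (cX q) -> In y (cX q) -> ~ In y (cX p) ->
  piB x = BZ z -> piB y = BZ z' -> In v (cX p ++ cX q) ->
  amal_rel p q v x -> amal_rel p q v y -> lev_below ltW (lev v) (F z z').
Proof.
  intros Pp Pq H Hx Hx' Hy Hy' Bx By Hv V1 V2.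
  destruct (classic (In v (cX p))) as [Vp|Vp].
  - destruct (amal_rel_leave_p Pp Pq Vp Hy' V2) as [r [Hr [A B]]].
    apply lev_below_mono with (lev r); [exact (cond_leLev Pp A) | apply (H r x y); auto].
  - destruct (amal_rel_enter_p Pp Pq Vp Hx V1) as [r [Hr [A B]]].
    apply lev_below_mono with (lev r); [exact (cond_leLev Pq A) | apply (H r x y); auto].
Qed.

Lemma amal_P4_cross {c d r z n xi} : inP c -> inP d -> common c d r -> xi <> z ->
  cR c (TM z n) r -> cR d r (TT xi) -> False.
Proof.
  intros Pc Pd [Rc Rd] Nxz A B.
  destruct (cond_dom Pc A) as [Mc _].
  destruct (classic (TM z n = r)) as [<-|E].
  { apply (proj2 (cond_P4 Pd Rd) xi Nxz (proj2 (cond_dom Pd B))). split; auto. discriminate. }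
  pose proof (cond_lev Pc (conj A E)) as Lv.
  destruct r as [a m|w m|w]; simpl in Lv; try contradiction.
  destruct (classic (w = z)) as [->|Nwz].
  - destruct (classic (TT z = (TT xi : T))) as [E2|E2]; [injection E2; auto|].
    pose proof (cond_lev Pd (conj B E2)) as Lv2. contradiction.
  - apply (proj2 (cond_P4 Pc Mc) w Nwz Rc). split; auto.
Qed.

Definition new_meet (p q : cond) (x y : T) : list T :=
  if excluded_middle_informative (amal_rel p q x y) then [x]
  else if excluded_middle_informative (amal_rel p q y x) then [y]
  else filter (fun u => truth (amal_rel p q u x /\ amal_rel p q u y)) (cX p ++ cX q).

Definition amal_meet (p q : cond) (x y : T) : list T :=
  if excluded_middle_informative (In x (cX p) /\ In y (cX p)) then cI p x y
  else if excluded_middle_informative (In x (cX q) /\ In y (cX q)) then cI q x y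
  else new_meet p q x y.

Definition amal (p q : cond) : cond := mkCond (cX p ++ cX q) (amal_rel p q) (amal_meet p q).

Lemma amal_meet_in_p p q x y : In x (cX p) -> In y (cX p) -> amal_meet p q x y = cI p x y.
Proof.
  intros Hx Hy. unfold amal_meet.
  destruct (excluded_middle_informative (In x (cX p) /\ In y (cX p))); tauto.
Qed.

Lemma amal_meet_in_q p q x y : ~ (In x (cX p) /\ In y (cX p)) ->
  In x (cX q) -> In y (cX q) -> amal_meet p q x y = cI q x y.
Proof.
  intros N Hx Hy. unfold amal_meet.
  destruct (excluded_middle_informative (In x (cX p) /\ In y (cX p))); [tauto|].
  destruct (excluded_middle_informative (In x (cX q) /\ In y (cX q))); tauto.
Qed.

Lemma amal_meet_new p q x y : ~ (In x (cX p) /\ In y (cX p)) ->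
  ~ (In x (cX q) /\ In y (cX q)) -> amal_meet p q x y = new_meet p q x y.
Proof.
  intros N1 N2. unfold amal_meet.
  destruct (excluded_middle_informative (In x (cX p) /\ In y (cX p))); [tauto|].
  destruct (excluded_middle_informative (In x (cX q) /\ In y (cX q))); tauto.
Qed.

Lemma sameset_eq (l m : list T) : l = m -> sameset l m.
Proof. intros <- u. tauto. Qed.

Section Assembly.
Variables p q : cond.
Hypotheses (Pp : inP p) (Pq : inP q) (Ag : agree p q).
Hypotheses (Htwins : no_twins p q) (Hlow : cross_low p q).

Lemma new_meet_comparable x y : amal_rel p q x y -> new_meet p q x y = [x].
Proof.
  intros H. unfold new_meet. destruct (excluded_middle_informative (amal_rel p q x y)); tauto.
Qed.

Lemma new_meet_incomparable x y u : ~ amal_rel p q x y -> ~ amal_rel p q y x ->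
  In u (new_meet p q x y) <-> In u (cX p ++ cX q) /\ amal_rel p q u x /\ amal_rel p q u y.
Proof.
  intros N1 N2. unfold new_meet.
  destruct (excluded_middle_informative (amal_rel p q x y)); [contradiction|].
  destruct (excluded_middle_informative (amal_rel p q y x)); [contradiction|].
  rewrite filter_In, truth_true. tauto.
Qed.

Lemma pair_ok_new x y :
  (In x (cX p) /\ ~ In x (cX q) /\ In y (cX q) /\ ~ In y (cX p)) \/
  (In x (cX q) /\ ~ In x (cX p) /\ In y (cX p) /\ ~ In y (cX q)) ->
  pair_ok (amal_rel p q) (cX p ++ cX q) (new_meet p q) x y.
Proof.
  intros Hn.
  assert (Hx : In x (cX p ++ cX q)) by (apply in_or_app; tauto).
  assert (Hy : In y (cX p ++ cX q)) by (apply in_or_app; tauto).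
  assert (Nxy : x <> y) by (intros <-; tauto).
  assert (Hmeet : forall x y, x <> y -> amal_rel p q y x -> new_meet p q x y = [y]).
  { intros a b N H. unfold new_meet.
    destruct (excluded_middle_informative (amal_rel p q a b)) as [G|G].
    - exfalso. apply N, (amal_rel_antisym Pp Pq); auto.
    - destruct (excluded_middle_informative (amal_rel p q b a)); tauto. }
  split; [|split; [split|split; [|split]]].
  - intros e1 e2. exfalso. destruct Hn as [(A&B&C&D)|(A&B&C&D)].
    + apply (Htwins x y); auto.
    + apply (Htwins y x); auto.
  - intros u. destruct (classic (amal_rel p q x y)) as [R1|R1].
    { rewrite (new_meet_comparable R1), (Hmeet y x); auto. tauto. }
    destruct (classic (amal_rel p q y x)) as [R2|R2].
    { rewrite (new_meet_comparable R2), (Hmeet x y); auto. tauto. }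
    rewrite !new_meet_incomparable; auto. tauto.
  - intros u. destruct (classic (amal_rel p q x y)) as [R1|R1].
    { rewrite new_meet_comparable; auto. intros [<-|[]]; auto. }
    destruct (classic (amal_rel p q y x)) as [R2|R2].
    { rewrite Hmeet; auto. intros [<-|[]]; auto. }
    rewrite new_meet_incomparable; tauto.
  - intros H. rewrite new_meet_comparable; auto. apply sameset_eq; auto.
  - intros N1 N2 u Hu. split.
    + intros [A B]. exists u. rewrite new_meet_incomparable; auto.
      repeat split; auto. apply (amal_rel_refl Pp Pq); auto.
    + intros [v [V1 V2]]. rewrite new_meet_incomparable in V1; auto.
      split; apply (amal_rel_trans Pp Pq Ag V2); tauto.
  - intros N1 N2 z xi Bx By Nz v. rewrite new_meet_incomparable; auto. intros [Hv [A B]].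
    destruct Hn as [(a&b&c&d)|(a&b&c&d)].
    + eapply (amal_new_lower_bound_low Pp Pq Hlow); eauto.
    + apply (amal_new_lower_bound_low Pq Pp (cross_low_sym Hlow) a b c d Bx By);
        [apply in_or_app; apply in_app_or in Hv; tauto | apply amal_rel_sym; auto ..].
Qed.

Lemma pair_ok_amal x y : In x (cX p ++ cX q) -> In y (cX p ++ cX q) -> x <> y ->
  pair_ok (amal_rel p q) (cX p ++ cX q) (amal_meet p q) x y.
Proof.
  intros Hx Hy N.
  destruct (classic (In x (cX p) /\ In y (cX p))) as [[Xp Yp]|NP].
  { apply pair_ok_ext with (amal_rel p q) (cX p ++ cX q) (cI p); try tauto;
      [apply sameset_eq; symmetry; apply amal_meet_in_p; auto .. | apply pair_ok_p; auto]. }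
  destruct (classic (In x (cX q) /\ In y (cX q))) as [[Xq Yq]|NQ].
  { apply pair_ok_ext with (amal_rel q p) (cX q ++ cX p) (cI q).
    - split; apply amal_rel_sym.
    - intros u. rewrite !in_app_iff. tauto.
    - apply sameset_eq; symmetry; apply amal_meet_in_q; auto.
    - apply sameset_eq; symmetry; apply amal_meet_in_q; tauto.
    - apply (pair_ok_p Pq Pp (agree_sym Ag)); auto. }
  apply pair_ok_ext with (amal_rel p q) (cX p ++ cX q) (new_meet p q); try tauto.
  - apply sameset_eq; symmetry; apply amal_meet_new; auto.
  - apply sameset_eq; symmetry; apply amal_meet_new; tauto.
  - apply pair_ok_new. apply in_app_or in Hx. apply in_app_or in Hy. tauto.
Qed.

Lemma amal_P4 z n : In (TM z n) (cX p ++ cX q) ->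
  strictR (amal p q) (TM z n) (TT z) /\
  forall xi, xi <> z -> In (TT xi) (cX p ++ cX q) -> ~ strictR (amal p q) (TM z n) (TT xi).
Proof.
  unfold strictR; simpl. intros H. split.
  - apply in_app_or in H. destruct H as [H|H].
    + destruct (proj1 (cond_P4 Pp H)) as [A B]. split; auto. apply amal_rel_p; auto.
    + destruct (proj1 (cond_P4 Pq H)) as [A B]. split; auto. apply amal_rel_q; auto.
  - intros xi Nxi Hxi [R N].
    destruct R as [R|[R|[[r [Ri [A B]]]|[r [Ri [A B]]]]]].
    + destruct (cond_dom Pp R) as [R1 R2]. apply (proj2 (cond_P4 Pp R1) xi Nxi R2). split; auto.
    + destruct (cond_dom Pq R) as [R1 R2]. apply (proj2 (cond_P4 Pq R1) xi Nxi R2). split; auto.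
    + apply (amal_P4_cross Pp Pq Ri Nxi A B).
    + refine (amal_P4_cross Pq Pp _ Nxi A B). tauto.
Qed.

Lemma amal_in_P : inP (amal p q).
Proof.
  unfold in_P, amal, strictR; simpl.
  split; [|split; [|split; [|split; [|split; [|split; [|split; [|split; [|split; [|split; [|split]]]]]]]]]].
  - intros x y H. apply (amal_rel_dom Pp Pq H).
  - apply (amal_rel_refl Pp Pq).
  - apply (amal_rel_antisym Pp Pq).
  - intros x y z. apply (amal_rel_trans Pp Pq Ag).
  - intros x y [H N]. apply (amal_rel_lev Pp Pq); auto.
  - intros x z Hx Bz. apply in_app_or in Hx. apply in_or_app. destruct Hx as [Hx|Hx].
    + left. apply (cond_P3 Pp Hx Bz).
    + right. apply (cond_P3 Pq Hx Bz).
  - exact amal_P4.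
  - intros s t Hs Ht N. apply (pair_ok_amal Hs Ht N).
  - intros t s a Ht Ha [R N].
    destruct (amal_P6 Pp Pq Ag Ha R N) as [v [V1 [V2 [V3 [V4 V5]]]]].
    exists v. repeat split; auto.
  - intros x y Hx Hy N. apply (pair_ok_amal Hx Hy N).
  - intros x y [R N]. destruct (amal_rel_dom Pp Pq R) as [Hx Hy]. apply (pair_ok_amal Hx Hy N), R.
  - intros x y Hx Hy N1 N2.
    assert (N : x <> y) by (intros <-; apply N1, (amal_rel_refl Pp Pq), Hx).
    split; [apply (pair_ok_amal Hx Hy N); auto|].
    intros z xi _ _. apply (pair_ok_amal Hx Hy N); auto.
Qed.

Lemma amal_extends_p : extends (amal p q) p.
Proof.
  split; [|split]; simpl.
  - intros x H. apply in_or_app; auto.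
  - intros x y Hx Hy. split; [apply amal_rel_p | apply (amal_rel_restrict Pp Pq Ag Hx Hy)].
  - intros x y Hx Hy N. apply sameset_eq, amal_meet_in_p; auto.
Qed.

Lemma amal_extends_q : extends (amal p q) q.
Proof.
  split; [|split]; simpl.
  - intros x H. apply in_or_app; auto.
  - intros x y Hx Hy. split; [apply amal_rel_q|].
    intros R. apply (amal_rel_restrict Pq Pp (agree_sym Ag) Hx Hy), amal_rel_sym, R.
  - intros x y Hx Hy N. destruct (classic (In x (cX p) /\ In y (cX p))) as [[Xp Yp]|NP].
    + rewrite amal_meet_in_p; auto. apply (proj2 Ag); auto.
    + apply sameset_eq, amal_meet_in_q; auto.
Qed.

Lemma compatible_of_agree : compatible ltW F p q.
Proof. exists (amal p q). split; [exact amal_in_P | split; [exact amal_extends_p | exact amal_extends_q]]. Qed.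
End Assembly.

End Amalgamation.

(** * Strong unboundedness, applied to an uncountable family *)

Section StrongUnboundedness.
Variables (W : Type) (ltW : W -> W -> Prop) (L : Type) (F : L -> L -> W).
Hypothesis omega1 : is_omega1 ltW.
Hypothesis SU : strongly_unbounded ltW F.

Lemma separated_pair X (Fam : X -> Prop) (g : X -> list L) (nu : nat) (delta : W) :
  uncountable Fam ->
  (forall p, Fam p -> NoDup (g p) /\ length (g p) = nu) ->
  (forall p q, Fam p -> Fam q -> p <> q -> forall z, In z (g p) -> ~ In z (g q)) ->
  exists p q, Fam p /\ Fam q /\ p <> q /\
    forall z z', In z (g p) -> In z' (g q) -> ltW delta (F z z').
Proof.
  intros U Hsize Hdisj. destruct nu as [|nu].
  { destruct (uncountable_inhabited U) as [p Sp]. destruct (uncountable_avoid p U) as [q [Sq Nq]].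
    exists q, p. repeat split; auto. intros z z' Hz.
    destruct (Hsize q Sq) as [_ Lq]. apply length_zero_iff_nil in Lq. rewrite Lq in Hz. contradiction. }
  destruct (uncountable_enumeration omega1 U) as [e [He1 He2]].
  destruct (SU delta (nu := S nu) (fun w => g (e w))) as [xi [eta [N Hx]]].
  - intros w. apply Hsize, He1.
  - intros xi eta Hs. apply NNPP. intros N.
    destruct (Hsize _ (He1 xi)) as [_ Lx].
    destruct (g (e xi)) as [|a l] eqn:E; [discriminate|].
    apply (Hdisj (e xi) (e eta) (He1 xi) (He1 eta) (He2 xi eta N) a).
    + rewrite E. left. reflexivity.
    + apply Hs. left. reflexivity.
  - intros xi eta N. apply Hdisj; auto.
  - exists (e xi), (e eta). repeat split; auto.
Qed.

End StrongUnboundedness.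

(** * The core of a Δ-system of conditions and the colouring *)

Section Core.
Variables (W : Type) (ltW : W -> W -> Prop) (L : Type) (F : L -> L -> W).
Hypothesis omega1 : is_omega1 ltW.
Hypothesis F_sym : forall a b, F a b = F b a.

Notation cond := (cond W L).
Notation T := (T W L).
Notation inP := (in_P ltW F).

Definition tag (x : T) : L + W :=
  match x with TL a _ => inr a | TM z _ => inl z | TT z => inl z end.
Definition tags (p : cond) : list (L + W) := map tag (cX p).

Lemma tag_In p x : In x (cX p) -> In (tag x) (tags p).
Proof. apply in_map. Qed.

Lemma tag_of_block [x : T] [z] : piB x = BZ z -> tag x = inl z.
Proof. destruct x; simpl; congruence. Qed.

Lemma tag_eq [s t : T] : piB s = piB t -> lev s = lev t -> tag s = tag t.
Proof. destruct s, t; simpl; congruence. Qed.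

(** The countable ordinals that a bound for a root [R] has to dominate: the
    levels in [R], and [F] on pairs of block indices in [R]. *)
Definition pair_value (s t : L + W) : W :=
  match s, t with inl z, inl z' => F z z' | inr a, _ => a | inl _, inr a => a end.
Definition root_values (R : list (L + W)) : list W :=
  map (fun st => pair_value (fst st) (snd st)) (list_prod R R).

Section Root.
Variables (R : list (L + W)) (rho : W).
Hypothesis rho_bound : forall v, In v (root_values R) -> leW ltW v rho.

Lemma rho_level a : In (inr a) R -> leW ltW a rho.
Proof.
  intros H. apply rho_bound, (in_map (fun st => pair_value (fst st) (snd st)) _ (inr a, inr a)).
  apply in_prod; auto.
Qed.

Lemma rho_F z z' : In (inl z) R -> In (inl z') R -> leW ltW (F z z') rho.
Proof.
  intros H H'. apply rho_bound, (in_map (fun st => pair_value (fst st) (snd st)) _ (inl z, inl z')).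
  apply in_prod; auto.
Qed.

Definition core (x : T) : Prop :=
  match x with TL a _ => leW ltW a rho | TM z _ => In (inl z) R | TT z => In (inl z) R end.

Lemma root_tag_core x : In (tag x) R -> core x.
Proof. destruct x; simpl; auto. apply rho_level. Qed.

Lemma core_high [x z] : core x -> piB x = BZ z -> In (inl z) R.
Proof. destruct x; simpl; try discriminate; intros H E; injection E as <-; exact H. Qed.

Lemma core_countable : countable core.
Proof.
  assert (HR : countable (fun z => In (inl z) R)).
  { exists (fun n => match nth_error R n with Some (inl z) => Some z | _ => None end).
    intros z Hz. destruct (In_nth_error _ _ Hz) as [n Hn]. exists n. rewrite Hn. reflexivity. }
  apply countable_sub with (D := fun x =>
     ((exists an, (leW ltW (fst an) rho /\ True) /\ TL (fst an) (snd an) = x) \/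
      (exists zn, (In (inl (fst zn)) R /\ True) /\ TM (fst zn) (snd zn) = x)) \/
      (exists z, In (inl z) R /\ TT z = x)).
  - intros [a n|z n|z] H; simpl in H.
    + left; left. exists (a, n). auto.
    + left; right. exists (z, n). auto.
    + right. exists z. auto.
  - repeat apply countable_union; apply countable_image; auto.
    + exact (countable_prod (leW_countable omega1 rho) countable_full_nat).
    + exact (countable_prod HR countable_full_nat).
Qed.

Lemma same_block_no_meet [c x y z u] : inP c -> In x (cX c) -> In y (cX c) -> x <> y ->
  ~ cR c x y -> ~ cR c y x -> piB x = BZ z -> piB y = BZ z -> ~ In u (cI c x y).
Proof.
  intros Pc Hx Hy N R1 R2 Bx By.
  destruct x as [a n|w n|w]; try discriminate; destruct y as [a' n'|w' n'|w']; try discriminate;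
    simpl in Bx, By; injection Bx as ->; injection By as ->.
  - exact (cond_P5 Pc Hx Hy N eq_refl eq_refl u).
  - exfalso. apply R1, (cond_P4 Pc Hx).
  - exfalso. apply R2, (cond_P4 Pc Hy).
  - contradiction (N eq_refl).
Qed.

Lemma core_below_low_point [c u a n] : inP c -> cR c u (TL a n) -> leW ltW a rho -> core u.
Proof.
  intros Pc Ru Ha. pose proof (cond_leLev Pc Ru) as Le.
  destruct u as [b m|w m|w]; simpl in Le; destruct Le as [Le|Le]; try contradiction; try discriminate.
  - apply (leW_trans omega1) with a; auto. left; auto.
  - injection Le as ->. exact Ha.
Qed.

(** A meet of two incomparable high core points from different blocks lies
    below [F] of their indices, which is at most [rho]. *)
Lemma high_meet_core [c x y z z' u] : inP c -> In x (cX c) -> In y (cX c) ->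
  ~ cR c x y -> ~ cR c y x -> core x -> core y -> piB x = BZ z -> piB y = BZ z' ->
  In u (cI c x y) -> core u.
Proof.
  intros Pc Hx Hy R1 R2 Cx Cy Bx By Hu.
  assert (N : x <> y) by (intros <-; apply R1, (cond_refl Pc Hx)).
  destruct (classic (z = z')) as [<-|Nz].
  { exfalso. exact (same_block_no_meet Pc Hx Hy N R1 R2 Bx By Hu). }
  pose proof (cond_i_low Pc Hx Hy R1 R2 (high_lev _ Bx) (high_lev _ By) Bx By Nz u Hu) as Hl.
  destruct u as [b m|w m|w]; simpl in Hl; try contradiction.
  simpl. apply (leW_trans omega1) with (F z z'); [left; auto | apply rho_F; [exact (core_high Cx Bx) | exact (core_high Cy By)]].
Qed.

Lemma core_closed_meet [c x y u] : inP c -> In x (cX c) -> In y (cX c) -> x <> y ->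
  core x -> core y -> In u (cI c x y) -> core u.
Proof.
  intros Pc Hx Hy N Cx Cy Hu.
  destruct (classic (cR c x y)) as [R1|R1].
  { apply (cond_i_comparable Pc (conj R1 N)) in Hu. destruct Hu as [<-|[]]; auto. }
  destruct (classic (cR c y x)) as [R2|R2].
  { apply (cond_i_sym Pc Hx Hy N), (cond_i_comparable Pc (conj R2 (not_eq_sym N))) in Hu.
    destruct Hu as [<-|[]]; auto. }
  destruct (cond_i_below Pc Hx Hy R1 R2 Hu) as [_ [Ux Uy]].
  destruct x as [a n|z n|z]; [exact (core_below_low_point Pc Ux Cx) | |];
    (destruct y as [a' n'|z' n'|z']; [exact (core_below_low_point Pc Uy Cy) | |]);
    exact (high_meet_core Pc Hx Hy R1 R2 Cx Cy eq_refl eq_refl Hu).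
Qed.

(** A core point below a high point outside the core has countable level: a
    core point of level ω1 lies in a block of [R], and (P4) forbids it to be
    below the top of another block. *)
Lemma core_below_new_point [c r y z] : inP c -> core r -> cR c r y -> piB y = BZ z ->
  ~ core y -> exists a n, r = TL a n.
Proof.
  intros Pc Cr Ry By Cy.
  assert (Nry : r <> y) by (intros <-; contradiction).
  pose proof (cond_lev Pc (conj Ry Nry)) as Lv.
  destruct r as [a n|w n|w]; [eauto | exfalso | exfalso].
  - destruct y as [a' m|w' m|w']; simpl in Lv; try contradiction.
    simpl in By. injection By as ->.
    destruct (classic (w = z)) as [<-|Nw]; [contradiction|].
    apply (proj2 (cond_P4 Pc (proj1 (cond_dom Pc Ry))) z (not_eq_sym Nw) (proj2 (cond_dom Pc Ry))).
    split; auto.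
  - destruct y; simpl in Lv; contradiction.
Qed.

(** The colour of a condition: its trace on the core (points, order and
    meets) and the number of its new block indices (those outside [R]). *)
Definition core_part (p : cond) : list T := filter (fun x => truth (core x)) (cX p).
Definition order_trace (p : cond) (K : list T) : list bool :=
  map (fun xy => truth (cR p (fst xy) (snd xy))) (list_prod K K).
Definition meet_trace (p : cond) (K : list T) : list bool :=
  map (fun xyu => truth (In (snd xyu) (cI p (fst (fst xyu)) (snd (fst xyu)))))
      (list_prod (list_prod K K) K).
Definition new_index (x : T) : list L :=
  match piB x with
  | BZ z => if excluded_middle_informative (In (inl z) R) then [] else [z]
  | BS => []
  end.
Definition new_indices (p : cond) : list L := nodup classic_eq_dec (flat_map new_index (cX p)).
Definition colour (p : cond) : list T * (list bool * (list bool * nat)) :=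
  (core_part p, (order_trace p (core_part p), (meet_trace p (core_part p), length (new_indices p)))).

Lemma core_part_In p x : In x (core_part p) <-> In x (cX p) /\ core x.
Proof. unfold core_part. rewrite filter_In, truth_true. tauto. Qed.

Lemma new_indices_In p z :
  In z (new_indices p) <-> (exists x, In x (cX p) /\ piB x = BZ z) /\ ~ In (inl z) R.
Proof.
  unfold new_indices. rewrite nodup_In, in_flat_map. split.
  - intros [x [Hx Hz]]. unfold new_index in Hz.
    destruct (piB x) as [|w] eqn:B; [contradiction|].
    destruct (excluded_middle_informative (In (inl w) R)) as [_|Nw]; [contradiction|].
    destruct Hz as [<-|[]]. eauto.
  - intros [[x [Hx B]] Nz]. exists x. split; auto. unfold new_index. rewrite B.
    destruct (excluded_middle_informative (In (inl z) R)); [contradiction | left; auto].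
Qed.

Lemma new_index_of_point [p x z] : In x (cX p) -> ~ core x -> piB x = BZ z -> In z (new_indices p).
Proof.
  intros Hx Cx Bx. apply new_indices_In. split; [eauto|].
  intros Hz. apply Cx, root_tag_core. rewrite (tag_of_block Bx). exact Hz.
Qed.

Lemma new_indices_disjoint [p q z] : (forall t, In t (tags p) /\ In t (tags q) <-> In t R) ->
  In z (new_indices p) -> In z (new_indices q) -> False.
Proof.
  intros Hroot Hp Hq.
  apply new_indices_In in Hp as [[x [Hx Bx]] Nz]. apply new_indices_In in Hq as [[y [Hy By]] _].
  apply Nz, Hroot. rewrite <- (tag_of_block Bx) at 1. rewrite <- (tag_of_block By).
  split; apply tag_In; auto.
Qed.

Lemma colours_countable (S : cond -> Prop) : countable (fun c => exists p, S p /\ colour p = c).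
Proof.
  apply countable_sub with (D := fun c => (forall x, In x (fst c) -> core x) /\ (True /\ (True /\ True))).
  - intros c [p [_ <-]]. simpl. repeat split. intros x Hx. apply core_part_In in Hx. tauto.
  - apply (countable_prod (A := fun l => forall x, In x l -> core x)
                          (B := fun _ => True /\ (True /\ True))).
    + apply countable_lists, core_countable.
    + apply (countable_prod (A := fun _ : list bool => True) (B := fun _ => True /\ True)).
      * exact countable_bool_lists.
      * exact (countable_prod countable_bool_lists countable_full_nat).
Qed.

Section SameColour.
Variables p q : cond.
Hypotheses (Pp : inP p) (Pq : inP q).
Hypothesis root : forall t, In t (tags p) /\ In t (tags q) <-> In t R.
Hypothesis same_colour : colour p = colour q.
Hypothesis separated :
  forall z z', In z (new_indices p) -> In z' (new_indices q) -> ltW rho (F z z').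

Lemma same_core_part : core_part p = core_part q.
Proof. exact (f_equal fst same_colour). Qed.

Lemma core_part_q x : In x (core_part p) <-> In x (cX q) /\ core x.
Proof. rewrite same_core_part. apply core_part_In. Qed.

Lemma common_point_core x : In x (cX p) -> In x (cX q) -> core x.
Proof. intros Hp Hq. apply root_tag_core, root. split; apply tag_In; auto. Qed.

Lemma new_point_p_not_core [x] : In x (cX p) -> ~ In x (cX q) -> ~ core x.
Proof. intros Hp Hq Cx. apply Hq, core_part_q, core_part_In. auto. Qed.

Lemma new_point_q_not_core [x] : In x (cX q) -> ~ In x (cX p) -> ~ core x.
Proof. intros Hq Hp Cx. apply Hp, core_part_In, core_part_q. auto. Qed.

(** Equal traces on the common core make the orders and meets agree. *)
Lemma agree_same_colour : agree p q.
Proof.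
  set (K := core_part p).
  assert (HK : forall x, common p q x -> In x K).
  { intros x [Xp Xq]. apply core_part_In. split; auto. apply common_point_core; auto. }
  assert (Ho : order_trace p K = order_trace q K).
  { pose proof (f_equal (fun c => fst (snd c)) same_colour) as E. simpl in E.
    rewrite <- same_core_part in E. exact E. }
  assert (Hm : meet_trace p K = meet_trace q K).
  { pose proof (f_equal (fun c => fst (snd (snd c))) same_colour) as E. simpl in E.
    rewrite <- same_core_part in E. exact E. }
  split.
  - intros x y Hx Hy. apply truth_inj.
    exact (ext_in_map Ho (x, y) (in_prod _ _ _ _ (HK x Hx) (HK y Hy))).
  - intros x y Hx Hy N u.
    assert (E : In u K -> (In u (cI p x y) <-> In u (cI q x y))).
    { intros Hu. apply truth_inj.
      exact (ext_in_map Hm ((x, y), u) (in_prod _ _ _ _ (in_prod _ _ _ _ (HK x Hx) (HK y Hy)) Hu)). }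
    destruct Hx as [Xp Xq], Hy as [Yp Yq].
    assert (Cx : core x) by (apply common_point_core; auto).
    assert (Cy : core y) by (apply common_point_core; auto).
    split; intros Hu; apply E; auto.
    + apply core_part_In. split; [apply (cond_i_sym Pp Xp Yp N); auto|].
      exact (core_closed_meet Pp Xp Yp N Cx Cy Hu).
    + apply core_part_q. split; [apply (cond_i_sym Pq Xq Yq N); auto|].
      exact (core_closed_meet Pq Xq Yq N Cx Cy Hu).
Qed.

(** Twins would have a common tag, hence lie in the core, hence be common. *)
Lemma no_twins_same_colour : no_twins p q.
Proof.
  intros s t Sp Sq Tq Tp Eb El. apply (new_point_p_not_core Sp Sq), root_tag_core, root.
  split; [apply tag_In; auto | rewrite (tag_eq Eb El); apply tag_In; auto].
Qed.

(** A common point below a new high point has countable level at most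
    [rho], and [rho] is below [F] of any two new indices. *)
Lemma cross_low_same_colour : cross_low ltW F p q.
Proof.
  intros r x y z z' [Rp Rq] Xp Xq Yq Yp Bx By D.
  assert (Cr : core r) by (apply common_point_core; auto).
  assert (Cx : ~ core x) by (apply new_point_p_not_core; auto).
  assert (Cy : ~ core y) by (apply new_point_q_not_core; auto).
  assert (Low : exists a n, r = TL a n).
  { destruct D as [D|D]; [exact (core_below_new_point Pq Cr D By Cy) | exact (core_below_new_point Pp Cr D Bx Cx)]. }
  destruct Low as [a [n ->]]. simpl in Cr |- *.
  eapply (leW_ltW_trans omega1); [exact Cr|]. apply separated; [exact (new_index_of_point Xp Cx Bx) | exact (new_index_of_point Yq Cy By)].
Qed.

Lemma compatible_same_colour : compatible ltW F p q.
Proof.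
  exact (compatible_of_agree omega1 F_sym Pp Pq agree_same_colour no_twins_same_colour cross_low_same_colour).
Qed.
End SameColour.
End Root.
End Core.

(** * The countable chain condition *)

Section Main.
Variables (W : Type) (ltW : W -> W -> Prop) (L : Type) (F : L -> L -> W).
Hypothesis omega1 : is_omega1 ltW.
Hypothesis F_sym : forall a b, F a b = F b a.
Hypothesis SU : strongly_unbounded ltW F.

Lemma no_uncountable_antichain (A : cond W L -> Prop) :
  (forall p, A p -> in_P ltW F p) ->
  (forall p q, A p -> A q -> p <> q -> ~ compatible ltW F p q) ->
  uncountable A -> False.
Proof.
  intros HA Hanti UA.
  destruct (delta_system omega1 (@tags W L) UA) as [S1 [R [HS1 [U1 Hroot]]]].
  destruct (finite_bounded omega1 (root_values F R)) as [rho Hrho].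
  destruct (pigeonhole (colour ltW R rho) U1 (colours_countable omega1 R rho S1)) as [p0 [_ U2]].
  destruct (separated_pair omega1 SU (new_indices R) (nu := length (new_indices R p0)) rho U2)
    as [p [q [[Sp Cp] [[Sq Cq] [N Hsep]]]]].
  - intros p [_ Cp]. split; [apply NoDup_nodup|].
    exact (f_equal (fun c => snd (snd (snd c))) Cp).
  - intros p q [Sp _] [Sq _] N z Hp Hq. exact (new_indices_disjoint R (Hroot p q Sp Sq N) Hp Hq).
  - apply (Hanti p q (HS1 _ Sp) (HS1 _ Sq) N).
    apply (compatible_same_colour omega1 F_sym Hrho (HA _ (HS1 _ Sp)) (HA _ (HS1 _ Sq))
             (Hroot p q Sp Sq N)); [congruence | exact Hsep].
Qed.
End Main.

Theorem lemma3p9 (W : Type) (ltW : W -> W -> Prop) (L : Type) (F : L -> L -> W) :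
  is_omega1 ltW ->
  card_ge_omega3 ltW L ->
  (forall a b, F a b = F b a) ->
  strongly_unbounded ltW F ->
  ccc ltW F.
Proof.
  intros omega1 _ F_sym SU A HA Hanti.
  apply NNPP. intros Nccc.
  apply (no_uncountable_antichain omega1 F_sym SU HA Hanti). intros C.
  apply Nccc. destruct (countable_injection C) as [f Hf].
  exists f. intros p q Ap Aq E. apply Hf; auto.
Qed.
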